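(* Let $n\ge1$, let $w_{ij}\ge0$ for distinct $i,j\in\{1,\dots,n\}$, and for $a\in\{1,2\}^n$ let $W(a)=\sum_{i=1}^n\sum_{j:a_j\ne a_i}w_{ij}$. Let $a^*\in\arg\max_{a\in\{1,2\}^n}W(a)$. Then for every $a\in\{1,2\}^n$, $$\sum_{i=1}^n\big(W(a)-W(a^*_i,a_{-i})\big)\le 3W(a)-W(a^* ),$$ i.e. the common-interest game with welfare $W$ satisfies the smoothness inequality with $\lambda_c=1$, $\mu_c=3$.
   Context: For $a\in\{1,2\}^n$, $(a^*_i,a_{-i})$ denotes the joint action obtained from $a$ by replacing the $i$-th coordinate $a_i$ with $a^*_i$. *)

From mathcomp Require Import all_boot all_order all_algebra.
Set Implicit Arguments. Unset Strict Implicit. Unset Printing Implicit Defensive.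
Import Order.TTheory GRing.Theory Num.Theory.
Local Open Scope ring_scope.

(* Joint action profiles a in {1,2}^n, encoded as finite functions 'I_n -> 'I_2
   (action 1 <-> ord0, action 2 <-> 1). *)
Definition profile (n : nat) := {ffun 'I_n -> 'I_2}.

Definition welfare (R : nzRingType) (n : nat) (w : 'I_n -> 'I_n -> R)
    (a : profile n) : R :=
  \sum_(i < n) \sum_(j < n | a j != a i) w i j.

Definition deviate (n : nat) (a : profile n) (i : 'I_n) (x : 'I_2) : profile n :=
  [ffun j => if j == i then x else a j].

From mathcomp Require Import all_boot all_order all_algebra.
From mathcomp Require Import lra.
Import Order.TTheory GRing.Theory Num.Theory.
Local Open Scope ring_scope.

(* Write W(a) as a sum over ordered pairs (k, j) of w_kj times the indicator
   [a_j != a_k].  A unilateral deviation of player i only changes the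
   indicators of the pairs containing i, so the left-hand side splits into
   one term per pair (k, j), k != j, namely w_kj times the effect of moving k
   alone plus the effect of moving j alone to the profile b.  With only two
   actions a four-variable case analysis shows this is at most
   3 [a_j != a_k] - [b_j != b_k]; summing with the nonnegative weights gives
   the inequality for every profile b, maximal or not. *)

Definition cut_ind (R : nzRingType) (x y : 'I_2) : R := (x != y)%:R.

Lemma welfare_cut_ind (R : nzRingType) (n : nat) (w : 'I_n -> 'I_n -> R)
    (a : profile n) :
  welfare w a = \sum_(k < n) \sum_(j < n) w k j * cut_ind R (a j) (a k).
Proof.
apply: eq_bigr => k _; rewrite big_mkcond /=.
by apply: eq_bigr => j _; rewrite /cut_ind; case: (a j != a k); rewrite ?mulr1 ?mulr0.
Qed.

Lemma cut_ind_smooth2 (R : realDomainType) (x y u v : 'I_2) :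
  (cut_ind R y x - cut_ind R y u) + (cut_ind R y x - cut_ind R v x)
    <= 3 * cut_ind R y x - cut_ind R v u.
Proof.
rewrite /cut_ind.
case: x => [[|[|//]]] ?; case: y => [[|[|//]]] ?;
case: u => [[|[|//]]] ?; case: v => [[|[|//]]] ?; rewrite /=; lra.
Qed.

Lemma sum_deviate_cut_ind (R : nzRingType) (n : nat) (a b : profile n)
    (k j : 'I_n) : j != k ->
  \sum_(i < n) (cut_ind R (a j) (a k)
                - cut_ind R (deviate a i (b i) j) (deviate a i (b i) k))
    = (cut_ind R (a j) (a k) - cut_ind R (a j) (b k))
      + (cut_ind R (a j) (a k) - cut_ind R (b j) (a k)).
Proof.
move=> njk; rewrite (bigD1 k) //= (bigD1 j) //= big1 ?addr0; last first.
  by move=> i /andP[nik nij]; rewrite !ffunE ![_ == i]eq_sym (negbTE nik) (negbTE nij) subrr.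
by rewrite !ffunE !eqxx (negbTE njk) eq_sym (negbTE njk).
Qed.

Lemma sum_deviate_welfare (R : nzRingType) (n : nat) (w : 'I_n -> 'I_n -> R)
    (a b : profile n) :
  \sum_(i < n) (welfare w a - welfare w (deviate a i (b i)))
    = \sum_(k < n) \sum_(j < n) w k j * \sum_(i < n)
        (cut_ind R (a j) (a k)
         - cut_ind R (deviate a i (b i) j) (deviate a i (b i) k)).
Proof.
under eq_bigr => i _.
  rewrite !welfare_cut_ind -sumrB; under eq_bigr => k _ do rewrite -sumrB.
  over.
rewrite exchange_big; apply: eq_bigr => k _; rewrite exchange_big; apply: eq_bigr => j _.
by rewrite mulr_sumr; apply: eq_bigr => i _; rewrite mulrBr.
Qed.

Lemma welfare_deviate_smooth (R : realDomainType) (n : nat)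
    (w : 'I_n -> 'I_n -> R) (hw : forall i j : 'I_n, i != j -> 0 <= w i j)
    (a b : profile n) :
  \sum_(i < n) (welfare w a - welfare w (deviate a i (b i)))
    <= 3 * welfare w a - welfare w b.
Proof.
rewrite sum_deviate_welfare !welfare_cut_ind mulr_sumr -sumrB; apply: ler_sum => k _.
rewrite mulr_sumr -sumrB; apply: ler_sum => j _.
have [-> | njk] := eqVneq j k.
  by rewrite big1 /cut_ind ?eqxx ?mulr0 ?subrr // => i _; rewrite eqxx subrr.
rewrite mulrCA -mulrBr sum_deviate_cut_ind //.
by apply: ler_wpM2l; [apply: hw; rewrite eq_sym | apply: cut_ind_smooth2].
Qed.

Theorem mainTheorem8 (R : realFieldType) (n : nat) (hn : (1 <= n)%N)
    (w : 'I_n -> 'I_n -> R)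
    (hw : forall i j : 'I_n, i != j -> 0 <= w i j)
    (astar : profile n)
    (hmax : forall b : profile n, welfare w b <= welfare w astar) :
  forall a : profile n,
    \sum_(i < n) (welfare w a - welfare w (deviate a i (astar i)))
      <= 3 * welfare w a - welfare w astar.
Proof. by move=> a; apply: welfare_deviate_smooth. Qed.
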